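(* Let $\Gamma$ be a group and $\mathcal{S}=\mathcal{S}(\Pi,A,\xi)$ a Gr-category of the type $(\Pi,A)$. Let $(\theta,F)$ and $(\mu,G)$ be enough strict factor sets on $\Gamma$ with coefficients in $\mathcal{S}$ which are cohomologous. Then they determine the same structure of $\Pi$-module $\Gamma$-equivariant on $A$, and their induced 3-cocycles $h^{(\theta,F)},h^{(\mu,G)}\in Z^3_\Gamma(\Pi,A)$ are cohomologous, i.e. $h^{(\theta,F)}-h^{(\mu,G)}=\partial g$ for some $g\in C^2_\Gamma(\Pi,A)$.
   Context: A Gr-category of the type $(\Pi,A)$ ($\Pi$ a group, $A$ a left $\Pi$-module), $\mathcal{S}(\Pi,A,\xi)$: objects are elements of $\Pi$, morphisms only automorphisms $\mathrm{Aut}(x)=\{x\}\times A$, composition $(x,u)\circ(x,v)=(x,u+v)$, tensor $x\otimes y=xy$, $(x,u)\otimes(y,v)=(xy,u+xv)$, associativity constraint $(xyz,\xi(x,y,z))$ with $\xi$ a normalized 3-cocycle of $\Pi$ in $A$, strict unit constraints (unit $I=1$). Monoidal functors $F=(F,\widetilde F,\widehat F)$ have $\widetilde F_{x,y}:F(x\otimes y)\to F(x)\otimes F(y)$, $\widehat F:F(I)\to I$. A factor set on $\Gamma$ with coefficients in $\mathcal{S}$: monoidal autoequivalences $F^\sigma$ and isomorphisms of monoidal functors $\theta^{\sigma,\tau}:F^\sigma F^\tau\to F^{\sigma\tau}$ with $F^1=\mathrm{id}$, $\theta^{1,\sigma}=\theta^{\sigma,1}=\mathrm{id}$, $\theta^{\sigma\tau,\gamma}\circ(\theta^{\sigma,\tau}F^\gamma)=\theta^{\sigma,\tau\gamma}\circ(F^\sigma\theta^{\tau,\gamma})$;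 enough strict means $\widehat{F^\sigma}=\mathrm{id}_I$ for all $\sigma$. $(\theta,F)$ and $(\mu,G)$ are cohomologous if there are isomorphisms of monoidal functors $u^\sigma:F^\sigma\to G^\sigma$ with $u^1=\mathrm{id}$ and $u^{\sigma\tau}\circ\theta^{\sigma,\tau}=\mu^{\sigma,\tau}\circ(u^\sigma G^\tau)\circ(F^\sigma u^\tau)$. A factor set $(\theta,F)$ determines a $\Pi$-module $\Gamma$-equivariant structure on $A$ by $\sigma x=F^\sigma(x)$, $F^\sigma(x,a)=(\sigma x,\sigma a)$ (so $\sigma(xa)=(\sigma x)(\sigma a)$). For an enough strict $(\theta,F)$, writing $\widetilde{F^\sigma}_{x,y}=(\sigma(xy),\tilde f(x,y,\sigma))$ and $\theta^{\sigma,\tau}_x=(\sigma\tau x,t(x,\sigma,\tau))$, the induced 3-cocycle $h^{(\theta,F)}:\Pi^3\cup(\Pi^2\times\Gamma)\cup(\Pi\times\Gamma^2)\to A$ is $\xi$ on $\Pi^3$, $\tilde f$ on $\Pi^2\times\Gamma$, $t$ on $\Pi\times\Gamma^2$; it lies in $Z^3_\Gamma(\Pi,A)$, the group of normalized maps (vanishing when any argument is an identity element) satisfying the Γ-operator 3-cocycle identities. $C^2_\Gamma(\Pi,A)$ is the group of normalized maps $g:\Pi^2\cup(\Pi\times\Gamma)\to A$, and $\partial g$ is given by $(\partial g)(x,y,z)=x\,g(y,z)-g(xy,z)+g(x,yz)-g(x,y)$, $(\partial g)(x,y,\sigma)=\sigma g(x,y)-g(\sigma x,\sigma y)-(\sigma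 x)g(y,\sigma)+g(xy,\sigma)-g(x,\sigma)$, $(\partial g)(x,\sigma,\tau)=\sigma g(x,\tau)-g(x,\sigma\tau)+g(\tau x,\sigma)$. *)

From HB Require Import structures.
From mathcomp Require Import all_boot all_algebra.
Set Implicit Arguments. Unset Strict Implicit. Unset Printing Implicit Defensive.
Import GRing.Theory.
Local Open Scope ring_scope.

Section Defs.
Variables (P Gam : groupType) (A : zmodType).

Record PiModule := {
  pact : P -> A -> A;
  pact_add : forall x a b, pact x (a + b) = pact x a + pact x b;
  pact_one : forall a, pact 1%g a = a;
  pact_mul : forall x y a, pact (x * y)%g a = pact x (pact y a) }.

Variable M : PiModule.
Local Notation act := (pact M).

(** normalized 3-cocycle of Pi in A (associativity constraint of S(Pi,A,xi)) *)
Definition normalized_3cocycle (xi : P -> P -> P -> A) : Prop :=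
  (forall x y z t, act x (xi y z t) - xi (x * y)%g z t + xi x (y * z)%g t
                   - xi x y (z * t)%g + xi x y z = 0)
  /\ (forall y z, xi 1%g y z = 0) /\ (forall x z, xi x 1%g z = 0)
  /\ (forall x y, xi x y 1%g = 0).

(** Data of a (would-be) monoidal endofunctor F = (F, F~, F^) of S(Pi,A,xi):
    - on objects  x |-> mo x ;
    - on morphisms (x,a) |-> (mo x, mm x a) ;
    - F~_{x,y} = (mo (x y), mt x y) : F(x (x) y) -> F x (x) F y ;
    - F^ = (1, mh) : F I -> I. *)
Record MonFun := { mo : P -> P; mm : P -> A -> A; mt : P -> P -> A; mh : A }.

Variable xi : P -> P -> P -> A.

(** F is a monoidal functor S -> S (morphisms of S are only automorphisms, so
    the existence of F~_{x,y} and F^ forces the object equalities). *)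
Definition is_monoidal_functor (F : MonFun) : Prop :=
  (* functor: preserves composition and identities *)
  (forall x a b, mm F x (a + b) = mm F x a + mm F x b)
  /\ (forall x, mm F x 0 = 0)
  (* F~_{x,y} : F(xy) -> F x (x) F y and F^ : F I -> I exist *)
  /\ (forall x y, mo F (x * y)%g = (mo F x * mo F y)%g)
  /\ mo F 1%g = 1%g
  (* naturality of F~ :  F~ o F(f (x) g) = (F f (x) F g) o F~ *)
  /\ (forall x y u v,
        mt F x y + mm F (x * y)%g (u + act x v)
        = (mm F x u + act (mo F x) (mm F y v)) + mt F x y)
  (* compatibility with the associativity constraints *)
  /\ (forall x y z,
        xi (mo F x) (mo F y) (mo F z) + mt F x y + mt F (x * y)%g z
        = act (mo F x) (mt F y z) + mt F x (y * z)%g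
          + mm F (x * y * z)%g (xi x y z))
  (* compatibility with the (strict) unit constraints *)
  /\ (forall x, mh F + mt F 1%g x = 0)
  /\ (forall x, act (mo F x) (mh F) + mt F x 1%g = 0).

(** monoidal autoequivalence: monoidal functor which is an equivalence of
    categories (essentially surjective = surjective on objects here, since
    isomorphic objects are equal; fully faithful = bijective on each Aut(x)). *)
Definition is_monoidal_autoequivalence (F : MonFun) : Prop :=
  is_monoidal_functor F /\ bijective (mo F) /\ (forall x, bijective (mm F x)).

Definition id_MonFun : MonFun :=
  {| mo := id; mm := fun _ a => a; mt := fun _ _ => 0; mh := 0 |}.

Definition MonFun_eq (F G : MonFun) : Prop :=
  (forall x, mo F x = mo G x) /\ (forall x a, mm F x a = mm G x a)
  /\ (forall x y, mt F x y = mt G x y) /\ mh F = mh G.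

(** composite F G of monoidal functors:
    (FG)~_{x,y} = F~_{Gx,Gy} o F(G~_{x,y}),  (FG)^ = F^ o F(G^). *)
Definition comp_MonFun (F G : MonFun) : MonFun :=
  {| mo := fun x => mo F (mo G x);
     mm := fun x a => mm F (mo G x) (mm G x a);
     mt := fun x y => mt F (mo G x) (mo G y) + mm F (mo G (x * y)%g) (mt G x y);
     mh := mh F + mm F (mo G 1%g) (mh G) |}.

(** u = (x |-> (mo F x, u x)) is a morphism (automatically an isomorphism)
    of monoidal functors F -> G. *)
Definition is_monoidal_nat (F G : MonFun) (u : P -> A) : Prop :=
  (* u_x : F x -> G x exists *)
  (forall x, mo F x = mo G x)
  /\ (forall x a, u x + mm F x a = mm G x a + u x)
  (* monoidality : G~_{x,y} o u_{xy} = (u_x (x) u_y) o F~_{x,y} *)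
  /\ (forall x y, mt G x y + u (x * y)%g
                  = (u x + act (mo F x) (u y)) + mt F x y)
  (* unit : F^ = G^ o u_I *)
  /\ mh F = mh G + u 1%g.

(** A factor set (theta, F) on Gam with coefficients in S:
    theta^{s,t}_x = (s t x, t x s t). *)
Definition is_factor_set (F : Gam -> MonFun) (t : P -> Gam -> Gam -> A) : Prop :=
  (forall s, is_monoidal_autoequivalence (F s))
  /\ MonFun_eq (F 1%g) id_MonFun
  /\ (forall s r, is_monoidal_nat (comp_MonFun (F s) (F r)) (F (s * r)%g)
                                  (fun x => t x s r))
  /\ (forall s x, t x 1%g s = 0) /\ (forall s x, t x s 1%g = 0)
  (* theta^{sr,g} o (theta^{s,r} F^g) = theta^{s,rg} o (F^s theta^{r,g}) *)
  /\ (forall s r g x,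
        t x (s * r)%g g + t (mo (F g) x) s r
        = t x s (r * g)%g + mm (F s) (mo (F r) (mo (F g) x)) (t x r g)).

Definition enough_strict (F : Gam -> MonFun) : Prop := forall s, mh (F s) = 0.

Definition cohomologous_factor_sets (F : Gam -> MonFun) (t : P -> Gam -> Gam -> A)
    (G : Gam -> MonFun) (m : P -> Gam -> Gam -> A) : Prop :=
  exists u : P -> Gam -> A,
    (forall s, is_monoidal_nat (F s) (G s) (fun x => u x s))
    /\ (forall x, u x 1%g = 0)
    (* u^{sr} o theta^{s,r} = mu^{s,r} o (u^s G^r) o (F^s u^r) *)
    /\ (forall s r x,
          u x (s * r)%g + t x s r
          = m x s r + u (mo (G r) x) s + mm (F s) (mo (F r) x) (u x r)).

(** The Gam-actions determined by a factor set: s x = F^s(x), and s a is the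
    second component of F^s(x,a) = (s x, s a) (taken at x = 1). *)
Definition gact_P (F : Gam -> MonFun) (s : Gam) (x : P) : P := mo (F s) x.
Definition gact_A (F : Gam -> MonFun) (s : Gam) (a : A) : A := mm (F s) 1%g a.

(** 3-cochains on Pi^3 u (Pi^2 x Gam) u (Pi x Gam^2), as triples of maps *)
Record cochain3 := {
  c3_PPP : P -> P -> P -> A; c3_PPG : P -> P -> Gam -> A; c3_PGG : P -> Gam -> Gam -> A }.

Definition induced_cocycle (F : Gam -> MonFun) (t : P -> Gam -> Gam -> A) : cochain3 :=
  {| c3_PPP := xi; c3_PPG := fun x y s => mt (F s) x y; c3_PGG := t |}.

(** normalized 2-cochains C^2_Gam(Pi,A): maps on Pi^2 u (Pi x Gam) *)
Definition normalized_2cochain (g1 : P -> P -> A) (g2 : P -> Gam -> A) : Prop :=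
  (forall y, g1 1%g y = 0) /\ (forall x, g1 x 1%g = 0)
  /\ (forall s, g2 1%g s = 0) /\ (forall x, g2 x 1%g = 0).

Definition coboundary2 (sP : Gam -> P -> P) (sA : Gam -> A -> A)
    (g1 : P -> P -> A) (g2 : P -> Gam -> A) : cochain3 :=
  {| c3_PPP := fun x y z => act x (g1 y z) - g1 (x * y)%g z + g1 x (y * z)%g - g1 x y;
     c3_PPG := fun x y s => sA s (g1 x y) - g1 (sP s x) (sP s y)
                            - act (sP s x) (g2 y s) + g2 (x * y)%g s - g2 x s;
     c3_PGG := fun x s r => sA s (g2 x r) - g2 x (s * r)%g + g2 (sP r x) s |}.

Definition cochain3_diff_eq (h h' d : cochain3) : Prop :=
  (forall x y z, c3_PPP h x y z - c3_PPP h' x y z = c3_PPP d x y z)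
  /\ (forall x y s, c3_PPG h x y s - c3_PPG h' x y s = c3_PPG d x y s)
  /\ (forall x s r, c3_PGG h x s r - c3_PGG h' x s r = c3_PGG d x s r).

End Defs.

(* All morphisms of S(Pi,A,xi) are automorphisms and A is abelian, so a
   natural isomorphism u : F -> G can only exist if F and G agree on
   morphisms; in particular cohomologous factor sets induce the same
   Gamma-action on A.  The monoidality of u^s says that the components
   F~^s and G~^s of the induced cocycles differ by the coboundary of u^s on
   Pi^2, and the cohomology relation between theta and mu says that their
   Pi x Gamma^2 components differ by the coboundary of u on Pi x Gamma^2.
   So h^(theta,F) - h^(mu,G) = dg with g = (0, u). *)
From HB Require Import structures.
From mathcomp Require Import all_boot all_algebra.
Import GRing.Theory.
Local Open Scope ring_scope.

Section MonoidalFunctors.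
Context {P : groupType} {A : zmodType} {M : PiModule P A}.
Local Notation act := (pact M).

Lemma pact0 (x : P) : act x 0 = 0.
Proof. by apply: (addrI (act x 0)); rewrite -pact_add !addr0. Qed.

Lemma monoidal_functor_mm1 {xi : P -> P -> P -> A} {F : MonFun P A} x a :
  is_monoidal_functor M xi F -> mm F x a = mm F 1%g a.
Proof.
(* naturality of F~ at the pair of morphisms ((1, a), (x, 0)) *)
move=> [_ [mm0 [_ [mo1 [natF _]]]]].
move: (natF 1%g x a 0); rewrite mul1g pact_one mm0 mo1 pact_one !addr0 addrC.
exact: addIr.
Qed.

Context {F G : MonFun P A} {u : P -> A}.
Hypothesis uFG : is_monoidal_nat M F G u.

Lemma monoidal_nat_mm x a : mm F x a = mm G x a.
Proof. by have [_ [natu _]] := uFG; apply: (addrI (u x)); rewrite natu addrC. Qed.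

Lemma monoidal_nat_mt x y :
  mt F x y - mt G x y = u (x * y)%g - act (mo F x) (u y) - u x.
Proof.
have [_ [_ [monu _]]] := uFG.
rewrite (canRL (addrK _) (monu x y)) [u x + _]addrC opprB !opprD !addrA.
by rewrite [LHS]addrC !addrA addNr add0r.
Qed.

Lemma monoidal_nat_unit : mh F = 0 -> mh G = 0 -> u 1%g = 0.
Proof.
have [_ [_ [_ unit_u]]] := uFG => hF0 hG0.
by move: unit_u; rewrite hF0 hG0 add0r => /esym.
Qed.

End MonoidalFunctors.

Theorem proposition4p1 (P Gam : groupType) (A : zmodType) (M : PiModule P A)
    (xi : P -> P -> P -> A) (Hxi : normalized_3cocycle M xi)
    (F : Gam -> MonFun P A) (t : P -> Gam -> Gam -> A)
    (G : Gam -> MonFun P A) (m : P -> Gam -> Gam -> A)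
    (HF : is_factor_set M xi F t) (HFs : enough_strict F)
    (HG : is_factor_set M xi G m) (HGs : enough_strict G)
    (Hcoh : cohomologous_factor_sets M F t G m) :
  (* same Gam-equivariant Pi-module structure on A *)
  ((forall s x, gact_P F s x = gact_P G s x)
   /\ (forall s a, gact_A F s a = gact_A G s a)
   /\ (forall s x a, mm (F s) x a = mm (G s) x a))
  /\
  (* the induced 3-cocycles are cohomologous *)
  exists (g1 : P -> P -> A) (g2 : P -> Gam -> A),
    normalized_2cochain g1 g2
    /\ cochain3_diff_eq (induced_cocycle xi F t) (induced_cocycle xi G m)
         (coboundary2 M (gact_P F) (gact_A F) g1 g2).
Proof.
have [u [uFG [u1 ut]]] := Hcoh.
have mmFG s := monoidal_nat_mm (uFG s).
have moFG s : mo (F s) =1 mo (G s) by have [] := uFG s.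
have mmF1 s x a := monoidal_functor_mm1 x a (HF.1 s).1.
split; first by do !split=> *; [exact: moFG | exact: mmFG | exact: mmFG].
exists (fun _ _ => 0), u; split.
  by do ![split=> //] => s; apply: monoidal_nat_unit (uFG s) (HFs s) (HGs s).
rewrite /gact_P /gact_A; do !split=> /=.
- by move=> x y z; rewrite subrr pact0 !subr0 addr0.
- move=> x y s; have [_ [mmF0 _]] := (HF.1 s).1.
  by rewrite (monoidal_nat_mt (uFG s)) mmF0 subrr sub0r [- _ + _]addrC.
- move=> x s r; move: (ut s r x).
  rewrite -moFG -(mmF1 s (mo (F r) x)) => /(canRL (addKr (u x (s * r)%g))).
  move=> ->; rewrite (addrC (- _)) addrAC -(addrA (m x s r)) [m x s r + _]addrC addrK.
  by rewrite [u _ s + _]addrC addrAC.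
Qed.
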